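(* For $\lambda>0$ and $\eta=(\sqrt{1/4+\lambda}-1/2)^{1/2}$, $$\sup_{x,y\in\mathbf{R}^3}|R_0^\pm(\lambda;x,y)|\lesssim\frac{\eta+\sqrt{1+\eta^2}}{1+2\eta^2},\qquad \sup_{x,y\in\mathbf{R}^3}\Big|\frac{d}{d\eta}R_0^\pm(\lambda;x,y)\Big|\lesssim\frac{1}{1+2\eta^2}.$$
   Context: $R_0^\pm(\lambda;x,y)$ is the kernel of $\lim_{\epsilon\downarrow0}(\Delta^2-\Delta-(\lambda\pm i\epsilon))^{-1}$ on $\mathbf{R}^3$: $R_0^\pm(\lambda;x,y)=\frac{1}{1+2\eta^2}\Big(\frac{e^{\pm i\eta|x-y|}}{4\pi|x-y|}-\frac{e^{-\sqrt{1+\eta^2}|x-y|}}{4\pi|x-y|}\Big)$, viewed as a function of $\eta$. *)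

From Stdlib Require Import Reals.
From Coquelicot Require Import Coquelicot.
Open Scope R_scope.

Definition R3 := (R * R * R)%type.

Definition dist3 (x y : R3) : R :=
  let '(x1, x2, x3) := x in let '(y1, y2, y3) := y in
  sqrt ((x1 - y1)^2 + (x2 - y2)^2 + (x3 - y3)^2).

Definition expi (t : R) : C := (cos t, sin t).

(* Sign: pm = true is R_0^+, pm = false is R_0^- *)
Definition sgn (pm : bool) : R := if pm then 1 else -1.

(* The kernel R_0^{pm}(lambda; x, y) as a function of eta:
     1/(1+2 eta^2) * ( e^{pm i eta r}/(4 pi r) - e^{-sqrt(1+eta^2) r}/(4 pi r) ),
   r = |x-y|.  On the diagonal r = 0 it is given its continuous extension
     (sqrt(1+eta^2) pm i eta) / (4 pi (1+2 eta^2)). *)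
Definition R0res (pm : bool) (eta : R) (x y : R3) : C :=
  let r := dist3 x y in
  let s := sgn pm in
  if Req_EM_T r 0 then
    Cdiv (Cplus (RtoC (sqrt (1 + eta^2))) (0, s * eta)) (RtoC (4 * PI * (1 + 2 * eta^2)))
  else
    Cmult (RtoC (/ (1 + 2 * eta^2)))
      (Cminus (Cdiv (expi (s * eta * r)) (RtoC (4 * PI * r)))
              (Cdiv (RtoC (exp (- sqrt (1 + eta^2) * r))) (RtoC (4 * PI * r)))).

Definition eta_of (lam : R) : R := sqrt (sqrt (1/4 + lam) - 1/2).

From Stdlib Require Import Reals Lra.
From Coquelicot Require Import Coquelicot.
Open Scope R_scope.

(* R_0^± = (1 + 2 η^2)^{-1} G(η), where G is the difference of the
   Helmholtz kernel e^{±iηr}/(4πr) and the Yukawa kernel e^{-√(1+η^2) r}/(4πr).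
   Both exponentials differ from 1 by at most their exponent times r, so the 1/r
   singularity cancels: |G| ≤ (η + √(1+η^2))/(4π) and |∂_η G| ≤ 2/(4π),
   uniformly in r.  The product rule and η (η + √(1+η^2)) ≤ 1 + 2 η^2 then give
   both bounds. *)

Lemma Rabs_sin_le t : Rabs (sin t) <= Rabs t.
Proof.
  replace (sin t) with (sin t - sin 0) by (rewrite sin_0; ring).
  replace (Rabs t) with (1 * Rabs (t - 0)) by (rewrite Rminus_0_r; ring).
  apply bounded_variation with (dh := cos).
  intros u _; split; [apply is_derive_sin |].
  apply Rabs_le; pose proof (COS_bound u); lra.
Qed.

Lemma exp_neg_le_1 x : 0 <= x -> exp (- x) <= 1.
Proof.
  intros Hx.
  pose proof (exp_ineq1_le x); pose proof (exp_pos (- x)).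
  assert (exp (- x) * exp x = 1) by (rewrite <- exp_plus, Rplus_opp_l; apply exp_0).
  nra.
Qed.

Lemma Rabs_1_sub_exp_neg_le x : 0 <= x -> Rabs (1 - exp (- x)) <= x.
Proof.
  intros Hx.
  pose proof (exp_ineq1_le (- x)); pose proof (exp_neg_le_1 x Hx).
  rewrite Rabs_pos_eq; lra.
Qed.

Lemma Cmod_pair_le a b : Cmod (a, b) <= Rabs a + Rabs b.
Proof.
  pose proof (Rabs_pos a); pose proof (Rabs_pos b).
  unfold Cmod; simpl.
  rewrite <- (sqrt_pow2 (Rabs a + Rabs b)) by lra.
  apply sqrt_le_1_alt.
  rewrite <- (pow2_abs a) at 1; rewrite <- (pow2_abs b) at 1; nra.
Qed.

Lemma scal_RtoC (a : R) (z : C) : scal (V := C_R_ModuleSpace) a z = (RtoC a * z)%C.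
Proof.
  destruct z as [u v]; apply injective_projections; simpl;
    [change (a * u = a * u - 0 * v) | change (a * v = a * v + 0 * u)]; ring.
Qed.

Lemma Cmod_scal (a : R) (z : C) : Cmod (scal (V := C_R_ModuleSpace) a z) = Rabs a * Cmod z.
Proof. now rewrite scal_RtoC, Cmod_mult, Cmod_R. Qed.

Lemma Cmod_expi t : Cmod (expi t) = 1.
Proof.
  unfold Cmod, expi; cbn [fst snd].
  replace (cos t ^ 2 + sin t ^ 2) with 1 by (rewrite <- (sin2_cos2 t); unfold Rsqr; ring).
  apply sqrt_1.
Qed.

Lemma Cmod_expi_sub_1 t : Cmod (expi t - 1) <= Rabs t.
Proof.
  (* |e^{it} - 1|^2 = 2 - 2 cos t = 4 sin^2 (t/2) *)
  assert (Hhalf : cos t = 1 - 2 * sin (t / 2) ^ 2).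
  { replace t with (2 * (t / 2)) at 1 by field.
    rewrite cos_2a_sin; ring. }
  assert (Hsin : sin (t / 2) ^ 2 <= (t / 2) ^ 2).
  { rewrite <- (pow2_abs (sin _)), <- (pow2_abs (t / 2)).
    pose proof (Rabs_sin_le (t / 2)); pose proof (Rabs_pos (sin (t / 2))); nra. }
  assert (Hsq : (cos t + - 1) ^ 2 + (sin t + - 0) ^ 2 <= t ^ 2).
  { pose proof (sin2_cos2 t); unfold Rsqr in *; nra. }
  unfold Cmod.
  rewrite <- (sqrt_pow2 (Rabs t)) by apply Rabs_pos.
  apply sqrt_le_1_alt.
  rewrite pow2_abs.
  exact Hsq.
Qed.

Lemma Rabs_div_sqrt_1_sq_le e : Rabs (e / sqrt (1 + e ^ 2)) <= 1.
Proof.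
  assert (Hb : 0 < sqrt (1 + e ^ 2)) by (apply sqrt_lt_R0; nra).
  assert (Heb : Rabs e <= sqrt (1 + e ^ 2)).
  { rewrite <- (sqrt_pow2 (Rabs e)) by apply Rabs_pos.
    apply sqrt_le_1_alt; rewrite pow2_abs; lra. }
  rewrite Rabs_div, (Rabs_pos_eq (sqrt _)) by lra.
  apply Rle_div_l; lra.
Qed.

Lemma is_derive_scal_fct {V : NormedModule R_AbsRing} (f : R -> R) (g : R -> V) x df dg :
  is_derive f x df -> is_derive g x dg ->
  is_derive (fun t => scal (f t) (g t)) x (plus (scal df (g x)) (scal (f x) dg)).
Proof.
  intros Hf Hg.
  eapply filterdiff_ext_lin.
  - exact (filterdiff_scal_fct x f g _ _ Rmult_comm Hf Hg).
  - intros y; cbn.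
    rewrite scal_distr_l, !scal_assoc.
    f_equal; f_equal; unfold mult; cbn; ring.
Qed.

Lemma is_derive_scal_r {V : NormedModule R_AbsRing} (k : R) (g : R -> V) x dg :
  is_derive g x dg -> is_derive (fun t => scal k (g t)) x (scal k dg).
Proof.
  intros Hg.
  eapply filterdiff_ext_lin.
  - exact (filterdiff_scal_r_fct k g _ Rmult_comm Hg).
  - intros y; cbn.
    rewrite !scal_assoc.
    f_equal; unfold mult; cbn; ring.
Qed.

Lemma is_derive_pair (u v : R -> R) x du dv :
  is_derive u x du -> is_derive v x dv ->
  is_derive (fun t => (u t, v t) : C) x ((du, dv) : C).
Proof.
  intros Hu Hv.
  pose proof (is_derive_plus _ _ x _ _
    (is_derive_scal_l (V := C_R_NormedModule) u x du ((1, 0) : C) Hu)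
    (is_derive_scal_l (V := C_R_NormedModule) v x dv ((0, 1) : C) Hv)) as H.
  assert (Hbasis : forall a b : R, plus (scal a ((1, 0) : C)) (scal b ((0, 1) : C)) = ((a, b) : C)).
  { intros a b; apply injective_projections; cbn;
      [change (a * 1 + b * 0 = a) | change (a * 0 + b * 1 = b)]; ring. }
  rewrite Hbasis in H.
  exact (is_derive_ext _ _ x _ (fun t => Hbasis (u t) (v t)) H).
Qed.

Lemma is_derive_expi t : is_derive expi t (Ci * expi t)%C.
Proof.
  replace (Ci * expi t)%C with ((- sin t, cos t) : C)
    by (apply injective_projections; cbn; ring).
  exact (is_derive_pair cos sin t _ _ (is_derive_cos t) (is_derive_sin t)).
Qed.

Lemma is_derive_RtoC (f : R -> R) x df :
  is_derive f x df -> is_derive (fun t => RtoC (f t)) x (RtoC df).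
Proof. intros Hf; exact (is_derive_pair f (fun _ => 0) x _ _ Hf (is_derive_const 0 x)). Qed.


Lemma is_derive_sqrt_1_sq e : is_derive (fun t => sqrt (1 + t ^ 2)) e (e / sqrt (1 + e ^ 2)).
Proof.
  assert (0 < 1 + e ^ 2) by nra.
  auto_derive; [lra |].
  replace (1 + e * (e * 1)) with (1 + e ^ 2) by ring.
  field; apply Rgt_not_eq, sqrt_lt_R0; lra.
Qed.

Lemma is_derive_yukawa_exp r e :
  is_derive (fun t => exp (- sqrt (1 + t ^ 2) * r)) e
    (- (e / sqrt (1 + e ^ 2)) * r * exp (- sqrt (1 + e ^ 2) * r)).
Proof.
  assert (0 < 1 + e ^ 2) by nra.
  auto_derive; [lra |].
  replace (1 + e * (e * 1)) with (1 + e ^ 2) by ring.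
  field; apply Rgt_not_eq, sqrt_lt_R0; lra.
Qed.

Lemma is_derive_inv_1_2sq e :
  is_derive (fun t => / (1 + 2 * t ^ 2)) e (- (4 * e) / (1 + 2 * e ^ 2) ^ 2).
Proof.
  assert (0 < 1 + 2 * e ^ 2) by nra.
  auto_derive; [lra |].
  field; lra.
Qed.

Lemma dist3_nonneg x y : 0 <= dist3 x y.
Proof. destruct x as [[x1 x2] x3], y as [[y1 y2] y3]; apply sqrt_pos. Qed.

Lemma Rabs_sgn pm : Rabs (sgn pm) = 1.
Proof. destruct pm; cbn; [apply Rabs_R1 | rewrite Rabs_left; lra]. Qed.

Definition helmholtz_minus_yukawa (s r e : R) : C :=
  if Req_EM_T r 0 then scal (/ (4 * PI)) ((sqrt (1 + e ^ 2), s * e) : C)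
  else scal (/ (4 * PI * r)) (expi (s * e * r) - RtoC (exp (- sqrt (1 + e ^ 2) * r)))%C.

Lemma R0res_scal pm e x y :
  R0res pm e x y = scal (/ (1 + 2 * e ^ 2)) (helmholtz_minus_yukawa (sgn pm) (dist3 x y) e).
Proof.
  pose proof PI_RGT_0.
  assert (0 < 1 + 2 * e ^ 2) by nra.
  unfold R0res, helmholtz_minus_yukawa; cbv zeta.
  destruct (Req_EM_T (dist3 x y) 0) as [_ | Hr]; rewrite !scal_RtoC;
    apply injective_projections; cbn; field; lra.
Qed.

Lemma Cmod_helmholtz_minus_yukawa_le s r e : Rabs s = 1 -> 0 <= r -> 0 <= e ->
  Cmod (helmholtz_minus_yukawa s r e) <= / (4 * PI) * (e + sqrt (1 + e ^ 2)).
Proof.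
  intros Hs Hr He.
  pose proof PI_RGT_0.
  assert (Hb : 0 < sqrt (1 + e ^ 2)) by (apply sqrt_lt_R0; nra).
  unfold helmholtz_minus_yukawa; destruct (Req_EM_T r 0) as [_ | Hr0]; rewrite Cmod_scal.
  - rewrite Rabs_pos_eq by (left; apply Rinv_0_lt_compat; lra).
    apply Rmult_le_compat_l; [left; apply Rinv_0_lt_compat; lra |].
    eapply Rle_trans; [apply Cmod_pair_le |].
    rewrite Rabs_mult, Hs, !Rabs_pos_eq; lra.
  - assert (Hr' : 0 < r) by lra.
    assert (Hdiff : Cmod (expi (s * e * r) - RtoC (exp (- sqrt (1 + e ^ 2) * r)))
                    <= (e + sqrt (1 + e ^ 2)) * r).
    { replace (expi (s * e * r) - RtoC (exp (- sqrt (1 + e ^ 2) * r)))%C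
        with ((expi (s * e * r) - 1) + RtoC (1 - exp (- (sqrt (1 + e ^ 2) * r))))%C
        by (rewrite RtoC_minus, Ropp_mult_distr_l; ring).
      eapply Rle_trans; [apply Cmod_triangle |].
      rewrite Cmod_R.
      pose proof (Cmod_expi_sub_1 (s * e * r)).
      pose proof (Rabs_1_sub_exp_neg_le (sqrt (1 + e ^ 2) * r) ltac:(nra)).
      rewrite !Rabs_mult, Hs, (Rabs_pos_eq e), (Rabs_pos_eq r) in * by lra.
      nra. }
    rewrite Rabs_pos_eq by (left; apply Rinv_0_lt_compat; nra).
    replace (/ (4 * PI) * (e + sqrt (1 + e ^ 2)))
      with (/ (4 * PI * r) * ((e + sqrt (1 + e ^ 2)) * r)) by (field; lra).
    apply Rmult_le_compat_l; [left; apply Rinv_0_lt_compat; nra | exact Hdiff].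
Qed.

Lemma is_derive_helmholtz_minus_yukawa_bounded s r e : Rabs s = 1 -> 0 <= r ->
  exists d, is_derive (helmholtz_minus_yukawa s r) e d /\ Cmod d <= 2 / (4 * PI).
Proof.
  intros Hs Hr.
  pose proof PI_RGT_0.
  pose proof (Rabs_div_sqrt_1_sq_le e) as Hq.
  unfold helmholtz_minus_yukawa; destruct (Req_EM_T r 0) as [_ | Hr0].
  - exists (scal (/ (4 * PI)) ((e / sqrt (1 + e ^ 2), s) : C)); split.
    + apply (is_derive_scal_r (V := C_R_NormedModule)), is_derive_pair;
        [apply is_derive_sqrt_1_sq | auto_derive; auto; ring].
    + rewrite Cmod_scal, Rabs_pos_eq by (left; apply Rinv_0_lt_compat; lra).
      pose proof (Cmod_pair_le (e / sqrt (1 + e ^ 2)) s).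
      unfold Rdiv; rewrite (Rmult_comm 2).
      apply Rmult_le_compat_l; [left; apply Rinv_0_lt_compat |]; lra.
  - assert (Hr' : 0 < r) by lra.
    set (E := exp (- sqrt (1 + e ^ 2) * r)).
    assert (HE : 0 < E <= 1).
    { split; [apply exp_pos |].
      unfold E; rewrite <- Ropp_mult_distr_l.
      apply exp_neg_le_1, Rmult_le_pos; [apply sqrt_pos | lra]. }
    exists (scal (/ (4 * PI * r))
              (minus (scal (s * r) (Ci * expi (s * e * r))%C)
                     (RtoC (- (e / sqrt (1 + e ^ 2)) * r * E)))); split.
    + apply (is_derive_scal_r (V := C_R_NormedModule)).
      apply (is_derive_minus (V := C_R_NormedModule)).
      * apply (is_derive_comp expi (fun t => s * t * r)); [apply is_derive_expi |].
        auto_derive; auto; ring.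
      * apply is_derive_RtoC, is_derive_yukawa_exp.
    + change (minus ?a ?b) with (a - b)%C.
      assert (Hderiv : Cmod (scal (s * r) (Ci * expi (s * e * r))%C
                             - RtoC (- (e / sqrt (1 + e ^ 2)) * r * E)) <= 2 * r).
      { unfold Cminus; eapply Rle_trans; [apply Cmod_triangle |].
        rewrite Cmod_opp, Cmod_scal, Cmod_mult, Cmod_Ci, Cmod_expi, Cmod_R.
        rewrite !Rabs_mult, Rabs_Ropp, Hs, (Rabs_pos_eq r), (Rabs_pos_eq E) by lra.
        pose proof (Rabs_pos (e / sqrt (1 + e ^ 2))).
        assert (Rabs (e / sqrt (1 + e ^ 2)) * E <= 1) by nra.
        nra. }
      rewrite Cmod_scal, Rabs_pos_eq by (left; apply Rinv_0_lt_compat; nra).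
      replace (2 / (4 * PI)) with (/ (4 * PI * r) * (2 * r)) by (field; lra).
      apply Rmult_le_compat_l; [left; apply Rinv_0_lt_compat; nra | exact Hderiv].
Qed.

Lemma scal_inv_1_2sq_bounds (g : R -> C) e g' c c' :
  0 <= e -> is_derive g e g' ->
  Cmod (g e) <= c * (e + sqrt (1 + e ^ 2)) -> Cmod g' <= c' ->
  Cmod (scal (/ (1 + 2 * e ^ 2)) (g e))
    <= (4 * c + c') * ((e + sqrt (1 + e ^ 2)) / (1 + 2 * e ^ 2)) /\
  exists d, is_derive (fun t => scal (/ (1 + 2 * t ^ 2)) (g t)) e d /\
            Cmod d <= (4 * c + c') * (1 / (1 + 2 * e ^ 2)).
Proof.
  intros He Hg Hge Hg'.
  set (m := sqrt (1 + e ^ 2)) in Hge |- *.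
  set (D := 1 + 2 * e ^ 2).
  assert (Hm2 : m ^ 2 = 1 + e ^ 2) by (apply pow2_sqrt; nra).
  assert (Hm : 1 <= m) by (pose proof (sqrt_pos (1 + e ^ 2)) as Hm0; fold m in Hm0; nra).
  assert (Hc : 0 <= c) by (pose proof (Cmod_ge_0 (g e)); nra).
  assert (Hc' : 0 <= c') by (pose proof (Cmod_ge_0 g'); lra).
  assert (HD : 1 <= D) by (unfold D; nra).
  assert (HiD : 0 < / D) by (apply Rinv_0_lt_compat; lra).
  (* e m <= m^2 = 1 + e^2 *)
  assert (Hgrowth : e * (e + m) <= D) by (unfold D; nra).
  split.
  - rewrite Cmod_scal, Rabs_pos_eq by lra; fold D.
    replace ((4 * c + c') * ((e + m) / D)) with (/ D * ((4 * c + c') * (e + m)))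
      by (unfold Rdiv; ring).
    apply Rmult_le_compat_l; [lra |].
    eapply Rle_trans; [exact Hge |].
    apply Rmult_le_compat_r; lra.
  - eexists; split.
    + exact (is_derive_scal_fct _ g e _ _ (is_derive_inv_1_2sq e) Hg).
    + change (plus ?u ?v) with (u + v)%C.
      eapply Rle_trans; [apply Cmod_triangle |].
      rewrite !Cmod_scal, Rabs_div, Rabs_Ropp, !Rabs_pos_eq by (fold D; nra).
      fold D.
      assert (Hfirst : 4 * e / D ^ 2 * Cmod (g e) <= 4 * c * / D).
      { assert (e * Cmod (g e) <= c * D) by nra.
        replace (4 * e / D ^ 2 * Cmod (g e)) with (4 * (e * Cmod (g e)) * / D * / D)
          by (field; lra).
        replace (4 * c) with (4 * (c * D) * / D) by (field; lra).
        apply Rmult_le_compat_r, Rmult_le_compat_r; lra. }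
      assert (Hsecond : / D * Cmod g' <= c' * / D) by nra.
      unfold Rdiv; lra.
Qed.

Theorem lemma4p1 :
  exists K : R, 0 < K /\
  forall (pm : bool) (lam : R), 0 < lam ->
  let eta := eta_of lam in
  forall x y : R3,
    Cmod (R0res pm eta x y) <= K * ((eta + sqrt (1 + eta^2)) / (1 + 2 * eta^2)) /\
    exists d : C, is_derive (fun e : R => R0res pm e x y) eta d /\
                  Cmod d <= K * (1 / (1 + 2 * eta^2)).
Proof.
  pose proof PI_RGT_0.
  set (c := / (4 * PI)).
  assert (Hc : 0 < c) by (apply Rinv_0_lt_compat; lra).
  exists (4 * c + 2 * c); split; [lra |].
  intros pm lam _ eta x y.
  assert (He : 0 <= eta) by apply sqrt_pos.
  pose proof (Cmod_helmholtz_minus_yukawa_le _ _ _ (Rabs_sgn pm) (dist3_nonneg x y) He) as Hg.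
  destruct (is_derive_helmholtz_minus_yukawa_bounded (sgn pm) (dist3 x y) eta
              (Rabs_sgn pm) (dist3_nonneg x y)) as [g' [Hdg Hg']].
  destruct (scal_inv_1_2sq_bounds _ _ _ c (2 * c) He Hdg Hg Hg') as [Hval [d [Hd Hdb]]].
  split.
  - rewrite R0res_scal; exact Hval.
  - exists d; split; [| exact Hdb].
    exact (is_derive_ext _ _ eta d (fun t => eq_sym (R0res_scal pm t x y)) Hd).
Qed.
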